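(* Let $p>1$ be an integer and let $u^{(p)}$ be the fixed point of the substitution $\varphi_p(L)=L^pS$, $\varphi_p(S)=M$, $\varphi_p(M)=L^{p-1}S$. There is no pair of factors $v,w$ of $u^{(p)}$ whose Parikh vectors satisfy $\Psi(v)-\Psi(w)=(3,-2,-1)$.
   Context: $u^{(p)}=\lim_{n\to\infty}\varphi_p^n(L)$. For a finite word $w$, its Parikh vector is $\Psi(w)=(|w|_L,|w|_S,|w|_M)$, where $|w|_a$ is the number of occurrences of the letter $a$ in $w$. *)

From HB Require Import structures.
From mathcomp Require Import all_boot all_algebra.
Set Implicit Arguments. Unset Strict Implicit. Unset Printing Implicit Defensive.
Import GRing.Theory.
Local Open Scope ring_scope.

Inductive letter := L | S | M.

Definition letter_eqb (a b : letter) : bool :=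
  match a, b with L, L | S, S | M, M => true | _, _ => false end.
Lemma letter_eqP : Equality.axiom letter_eqb.
Proof. by case; case; constructor. Qed.
HB.instance Definition _ := hasDecEq.Build letter letter_eqP.

Definition phi_letter (p : nat) (a : letter) : seq letter :=
  match a with
  | L => nseq p L ++ [:: S]
  | S => [:: M]
  | M => nseq p.-1 L ++ [:: S]
  end.

Definition phi (p : nat) (w : seq letter) : seq letter :=
  flatten (map (phi_letter p) w).

Definition phi_iter (p n : nat) : seq letter := iter n (phi p) [:: L].

(* The fixed point u^(p) = lim phi_p^n(L), as an infinite word nat -> letter:
   since phi_p(L) starts with L, phi_p^n(L) is a prefix of phi_p^(n+1)(L), and
   |phi_p^n(L)| >= n+1 for p > 1, so the i-th letter of u^(p) is the i-th
   letter of phi_p^(i+1)(L). *)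
Definition u (p : nat) (i : nat) : letter := nth L (phi_iter p i.+1) i.

Definition factor (p : nat) (v : seq letter) : Prop :=
  exists i n : nat, v = [seq u p j | j <- iota i n].

Definition parikh (w : seq letter) : int * int * int :=
  ((count_mem L w)%:Z, (count_mem S w)%:Z, (count_mem M w)%:Z).

(* Since (3, -2, -1) sums to 0, the two factors have the same length.  Every
   position of u^(p) is [phi_pos x + r], an offset [r] into the image of the
   letter u_x, so every long factor is obtained by cutting both ends of the
   image of a strictly shorter ancestor factor (strictly, because SS is not a
   factor); the Parikh vector changes by (l, s, m) |-> (p l + (p-1) m + r, l + m, s)
   with a correction r in [-p, p].  Abstract a pair of factors by the difference
   of their Parikh vectors and their four boundary letters.  Among pairs whose
   lengths differ by at most 7 this gives a finite transition system, and pairs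
   of equal-length factors only descend from such pairs: an ancestor pair with
   a larger length difference has images differing in length by more than 2p + 7.
   The reachable states, starting from all pairs of factors of length at most 2,
   are computed by reflection (symbolically in p for p >= 4, and for p = 2, 3),
   and (3, -2, -1) is not among them. *)

From Stdlib Require Import ZArith Lia FMapPositive.
From mathcomp Require Import all_boot all_algebra zify.
Set Implicit Arguments. Unset Strict Implicit. Unset Printing Implicit Defensive.

Section Substitution.
Variable p : nat.

Definition head_run (c : letter) : nat :=
  match c with L => p | S => 0 | M => p.-1 end.

Definition tail_letter (c : letter) : letter :=
  match c with L => S | S => M | M => S end.

Lemma phi_letterE c : phi_letter p c = rcons (nseq (head_run c) L) (tail_letter c).
Proof. by case: c; rewrite -cats1. Qed.

Lemma size_phi_letter c : size (phi_letter p c) = (head_run c).+1.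
Proof. by rewrite phi_letterE size_rcons size_nseq. Qed.

Lemma phi_cat w1 w2 : phi p (w1 ++ w2) = phi p w1 ++ phi p w2.
Proof. by rewrite /phi map_cat flatten_cat. Qed.

Lemma phi_seq1 c : phi p [:: c] = phi_letter p c.
Proof. by rewrite /phi /= cats0. Qed.

Lemma size_phi w : size w <= size (phi p w).
Proof.
elim: w => [|c w IH] //.
by rewrite /phi /= size_cat -/(phi p w) size_phi_letter; lia.
Qed.

Lemma count_phi w :
  [/\ count_mem L (phi p w) = p * count_mem L w + p.-1 * count_mem M w,
      count_mem S (phi p w) = count_mem L w + count_mem M w
    & count_mem M (phi p w) = count_mem S w].
Proof.
elim: w => [|c w [IHL IHS IHM]]; first by rewrite /phi /= !muln0.
rewrite -cat1s phi_cat phi_seq1 !count_cat IHL IHS IHM phi_letterE -cats1.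
by case: c; rewrite !count_cat !count_nseq /=; split; lia.
Qed.

Lemma head_run_le c : head_run c <= p.
Proof. by case: c => //=; lia. Qed.

Lemma nth_phi_letter_lt c r : r < head_run c -> nth L (phi_letter p c) r = L.
Proof. by move=> lt_r; rewrite phi_letterE nth_rcons size_nseq lt_r nth_nseq lt_r. Qed.

Lemma nth_phi_letter_head c : nth L (phi_letter p c) (head_run c) = tail_letter c.
Proof. by rewrite phi_letterE nth_rcons size_nseq ltnn eqxx. Qed.

Lemma take_phi_letter c r : r <= head_run c -> take r (phi_letter p c) = nseq r L.
Proof.
rewrite phi_letterE -cats1 take_cat size_nseq => le_r.
case: (ltngtP r (head_run c)) le_r => [lt _|//|-> _].
- by rewrite take_nseq // ltnW.
- by rewrite subnn take0 cats0.
Qed.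

Definition uwindow (i n : nat) : seq letter := [seq u p j | j <- iota i n].

Definition uprefix (x : nat) : seq letter := uwindow 0 x.

Lemma uprefixD x n : uprefix (x + n) = uprefix x ++ uwindow x n.
Proof. by rewrite /uprefix /uwindow iotaD map_cat. Qed.

Lemma uprefixS x : uprefix x.+1 = rcons (uprefix x) (u p x).
Proof. by rewrite -addn1 uprefixD cats1. Qed.

Lemma size_uprefix x : size (uprefix x) = x.
Proof. by rewrite size_map size_iota. Qed.

Lemma uprefix_take x y : x <= y -> uprefix x = take x (uprefix y).
Proof. by move=> le_xy; rewrite -(subnKC le_xy) uprefixD take_size_cat ?size_uprefix. Qed.

Lemma u_uprefix i x : i < x -> u p i = nth L (uprefix x) i.
Proof. by move=> lt_ix; rewrite (nth_map 0) ?size_iota // nth_iota. Qed.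

Definition phi_pos (x : nat) : nat := size (phi p (uprefix x)).

Lemma phi_posS x : phi_pos x.+1 = phi_pos x + (head_run (u p x)).+1.
Proof. by rewrite /phi_pos uprefixS -cats1 phi_cat size_cat phi_seq1 size_phi_letter. Qed.

Lemma leq_phi_pos x y : x <= y -> phi_pos x + (y - x) <= phi_pos y.
Proof.
elim: y => [|y IH] le_xy; first by case: x le_xy.
case: (ltngtP x y.+1) le_xy => // [lt_xy|->] _; last by rewrite subnn addn0.
by have := IH lt_xy; rewrite phi_posS; lia.
Qed.

Lemma phi_pos_decomp y : exists x r, r <= head_run (u p x) /\ y = phi_pos x + r.
Proof.
elim: y => [|y [x [r [le_r ->]]]]; first by exists 0, 0.
case: (ltnP r (head_run (u p x))) => [lt_r|ge_r].
- by exists x, r.+1; rewrite addnS.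
- by exists x.+1, 0; rewrite phi_posS; lia.
Qed.

Lemma phi_pos_ancestor_le x1 r1 x2 r2 :
  phi_pos x1 + r1 <= phi_pos x2 + r2 -> r2 <= head_run (u p x2) -> x1 <= x2.
Proof.
move=> le_pos le_r2; rewrite leqNgt; apply/negP => lt21.
by have := leq_phi_pos lt21; rewrite phi_posS; lia.
Qed.

Hypothesis p_gt0 : 0 < p.

Lemma phi_iter_prefix n k : n <= k -> exists t, phi_iter p k = phi_iter p n ++ t.
Proof.
have step j : exists t, phi_iter p j.+1 = phi_iter p j ++ t.
  elim: j => [|j [t IH]].
    by exists (phi_letter p M); rewrite /phi_iter /= phi_seq1 /=; case: (p) p_gt0.
  by exists (phi p t); rewrite -[phi_iter p j.+2]/(phi p (phi_iter p j.+1)) {1}IH phi_cat.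
elim: k => [|k IH] le_nk; first by exists [::]; case: n le_nk => // _; rewrite cats0.
case: (ltngtP n k.+1) le_nk => // [lt_nk|->] _; last by exists [::]; rewrite cats0.
have [t1 E1] := IH lt_nk; have [t2 E2] := step k.
by exists (t1 ++ t2); rewrite E2 E1 catA.
Qed.

Lemma size_phi_iter n : n < size (phi_iter p n).
Proof.
elim: n => [|n IH] //.
have [t Et] := phi_iter_prefix (leq0n n).
rewrite Et /= in IH.
rewrite -[phi_iter p n.+1]/(phi p (phi_iter p n)) Et phi_cat size_cat phi_seq1 size_phi_letter.
by have := size_phi t; rewrite /=; lia.
Qed.

Lemma u_nth N i : i < size (phi_iter p N) -> u p i = nth L (phi_iter p N) i.
Proof.
move=> lt_iN; have lt_i := size_phi_iter i.+1.
case: (leqP N i.+1) => [le|lt].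
- by have [t E] := phi_iter_prefix le; rewrite /u E nth_cat lt_iN.
- by have [t ->] := phi_iter_prefix (ltnW lt); rewrite /u nth_cat ltnW.
Qed.

Lemma uprefix_phi_iter N x : x <= size (phi_iter p N) -> uprefix x = take x (phi_iter p N).
Proof.
move=> le_x; apply: (@eq_from_nth _ L) => [|i].
  by rewrite size_uprefix size_take; case: ltngtP le_x => //; lia.
rewrite size_uprefix => lt_ix.
by rewrite -u_uprefix // nth_take // (@u_nth N) //; lia.
Qed.

Lemma phi_uprefix x : phi p (uprefix x) = uprefix (phi_pos x).
Proof.
have le_x : x <= size (phi_iter p (phi_pos x + x)) by have := size_phi_iter (phi_pos x + x); lia.
have le_pos : phi_pos x <= size (phi_iter p (phi_pos x + x).+1).
  by have := size_phi_iter (phi_pos x + x).+1; lia.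
rewrite (uprefix_phi_iter le_pos) [in LHS](uprefix_phi_iter le_x).
rewrite -[phi_iter p _.+1]/(phi p (phi_iter p (phi_pos x + x))).
rewrite -[in RHS](cat_take_drop x (phi_iter p (phi_pos x + x))) phi_cat take_size_cat //.
by rewrite -(uprefix_phi_iter le_x).
Qed.

Lemma uprefix_phi_posS x : uprefix (phi_pos x.+1) = uprefix (phi_pos x) ++ phi_letter p (u p x).
Proof. by rewrite -!phi_uprefix uprefixS -cats1 phi_cat phi_seq1. Qed.

Lemma uprefix_phi_pos x r : r <= head_run (u p x) ->
  uprefix (phi_pos x + r) = uprefix (phi_pos x) ++ nseq r L.
Proof.
move=> le_r; have lt_r : phi_pos x + r < phi_pos x.+1 by rewrite phi_posS; lia.
rewrite (uprefix_take (ltnW lt_r)) uprefix_phi_posS take_cat size_uprefix.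
by rewrite ltnNge leq_addr /= addKn take_phi_letter.
Qed.

Lemma u_phi_pos x r : r <= head_run (u p x) ->
  u p (phi_pos x + r) = nth L (phi_letter p (u p x)) r.
Proof.
move=> le_r; have lt_r : phi_pos x + r < phi_pos x.+1 by rewrite phi_posS; lia.
by rewrite (u_uprefix lt_r) uprefix_phi_posS nth_cat size_uprefix ltnNge leq_addr /= addKn.
Qed.

End Substitution.

Section NoSquareS.
Variable p : nat.
Hypothesis p_gt1 : 1 < p.

Lemma head_run_eq0 c : (head_run p c == 0) = (c == S).
Proof. by case: c => //=; apply/negbTE; lia. Qed.

Lemma head_phi_letter c : nth L (phi_letter p c) 0 != S.
Proof. by case: c => //=; case: (p) p_gt1 => [|[|q]]. Qed.

Lemma u_no_SS y : u p y = S -> u p y.+1 != S.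
Proof.
have [x [r [le_r ->]]] := phi_pos_decomp p y.
case: (ltngtP r (head_run p (u p x))) le_r => [lt _|//|-> _] uS.
  by move: uS; rewrite (u_phi_pos (ltnW p_gt1) (ltnW lt)) nth_phi_letter_lt.
by rewrite -addnS -phi_posS -[phi_pos p x.+1]addn0 (u_phi_pos (ltnW p_gt1)) // head_phi_letter.
Qed.

Lemma phi_pos_gap x : phi_pos p x + 3 <= phi_pos p x.+2.
Proof.
rewrite !phi_posS.
have : (head_run p (u p x) != 0) || (head_run p (u p x.+1) != 0).
  by rewrite !head_run_eq0; case: eqP => [/u_no_SS|].
by case/orP; lia.
Qed.

Lemma ancestor_window_shorter a' ra b' rb : ra <= head_run p (u p a') -> rb <= head_run p (u p b') ->
  phi_pos p a' + ra <= phi_pos p b' + rb ->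
  let n := (phi_pos p b' + rb) - (phi_pos p a' + ra) in b' - a' <= n /\ (3 <= n -> b' - a' < n).
Proof.
move=> le_ra le_rb le_pos n.
have := phi_pos_ancestor_le le_pos le_rb.
rewrite leq_eqVlt => /orP[/eqP eq_ab|lt_ab]; first by rewrite /n -eq_ab; lia.
have := leq_phi_pos p lt_ab; rewrite phi_posS => le1.
split; first by rewrite /n; lia.
case: (leqP a'.+3 b') => [le3 _|]; last by rewrite /n; lia.
by have := leq_phi_pos p le3; have := phi_pos_gap a'.+1; have := phi_posS p a'; rewrite /n; lia.
Qed.

End NoSquareS.

Lemma size_parikh (w : seq letter) :
  size w = count_mem L w + count_mem S w + count_mem M w.
Proof. by elim: w => [|c w IH] //=; rewrite IH; case: c => /=; lia. Qed.

Section PrefixCounts.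
Local Open Scope Z_scope.
Local Coercion Z.of_nat : nat >-> Z.
Variable p : nat.

Definition ucount (c : letter) (x : nat) : Z := count_mem c (uprefix p x).

Lemma ucount_window c x n :
  ucount c (x + n) - ucount c x = count_mem c (uwindow p x n).
Proof. by rewrite /ucount uprefixD count_cat; lia. Qed.

Lemma ucount_sum x : ucount L x + ucount S x + ucount M x = x.
Proof. by rewrite /ucount -{4}(size_uprefix p x) size_parikh; lia. Qed.

Hypothesis p_gt0 : (0 < p)%N.

Lemma phi_posE x : Z.of_nat (phi_pos p x) = (p + 1) * ucount L x + ucount S x + p * ucount M x.
Proof.
rewrite /phi_pos size_parikh /ucount.
by have [-> -> ->] := count_phi p (uprefix p x); nia.
Qed.

Lemma ucount_phi_pos x r : (r <= head_run p (u p x))%N ->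
  [/\ ucount L (phi_pos p x + r) = p * ucount L x + (p - 1) * ucount M x + r,
      ucount S (phi_pos p x + r) = ucount L x + ucount M x
    & ucount M (phi_pos p x + r) = ucount S x].
Proof.
move=> le_r; rewrite /ucount uprefix_phi_pos // -phi_uprefix // !count_cat !count_nseq.
by have [-> -> ->] := count_phi p (uprefix p x); rewrite /=; split; nia.
Qed.

End PrefixCounts.

Section Certificate.
Local Open Scope Z_scope.

(* [(k, c)] stands for the affine expression [k p + c] in the parameter [p]. *)
Definition lin := (Z * Z)%type.
Definition lin_eval (p : Z) (f : lin) : Z := f.1 * p + f.2.
Definition lin_sub (f g : lin) : lin := (f.1 - g.1, f.2 - g.2).

Definition head_run_lin (c : letter) : lin :=
  match c with L => (1, 0) | S => (0, 0) | M => (1, -1) end.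

(* A pair of factors [(u[a,b), u[c,d))] is abstracted by the difference of
   their Parikh vectors and by the letters [u_a, u_b, u_c, u_d]. *)
Inductive state := State (dL dS dM : Z) (a b c d : letter).

Definition state_eqb (s t : state) : bool :=
  let: State l1 s1 m1 a1 b1 c1 d1 := s in
  let: State l2 s2 m2 a2 b2 c2 d2 := t in
  [&& l1 =? l2, s1 =? s2, m1 =? m2, a1 == a2, b1 == b2, c1 == c2 & d1 == d2].

Definition letter_code (c : letter) : Z := match c with L => 0 | S => 1 | M => 2 end.

(* Any hash is sound here: membership compares states with [state_eqb]. *)
Definition state_key (s : state) : positive :=
  let: State l s' m a b c d := s in
  Z.to_pos (1 + (((l + 128) * 256 + (s' + 128)) * 256 + (m + 128)) * 81
              + ((letter_code a * 3 + letter_code b) * 3 + letter_code c) * 3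
              + letter_code d).

Definition store := PositiveMap.t (list state).
Definition bucket (s : state) (m : store) : list state :=
  odflt [::] (PositiveMap.find (state_key s) m).
Definition store_mem (s : state) (m : store) : bool := List.existsb (state_eqb s) (bucket s m).
Definition store_add (s : state) (m : store) : store :=
  PositiveMap.add (state_key s) (s :: bucket s m) m.
Definition store_elements (m : store) : list state :=
  List.flat_map snd (PositiveMap.elements m).

(* A partial decision procedure for [lin_eval p f <= lin_eval p g]. *)
Definition oracle := lin -> lin -> option bool.
Definition refuted (o : option bool) : bool := if o is Some false then true else false.
Definition maybe_between (ora : oracle) (lo x hi : lin) : bool :=
  ~~ refuted (ora lo x) && ~~ refuted (ora x hi).

Definition oracle_at (p : Z) : oracle := fun f g => Some (lin_eval p f <=? lin_eval p g).

Definition oracle_from (p0 : Z) : oracle := fun f g =>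
  let d := lin_sub g f in
  if (0 <=? d.1) && (0 <=? lin_eval p0 d) then Some true
  else if (d.1 <=? 0) && (lin_eval p0 d <? 0) then Some false else None.

(* The offsets [r] at which the letter [c] occurs in the image of [c']. *)
Definition offset_range (ora : oracle) (c' c : letter) : option (lin * lin) :=
  match c with
  | L => let hi := lin_sub (head_run_lin c') (0, 1) in
         if refuted (ora (0, 0) hi) then None else Some ((0, 0), hi)
  | _ => if c == tail_letter c' then Some (head_run_lin c', head_run_lin c') else None
  end.

Definition offset_diff_range (ora : oracle) (a' b' a b : letter) : option (lin * lin) :=
  match offset_range ora a' a, offset_range ora b' b with
  | Some (loa, hia), Some (lob, hib) => Some (lin_sub lob hia, lin_sub hib loa)
  | _, _ => None
  end.

Definition letters : list letter := [:: L; S; M].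

Definition max_len_diff : Z := 7.
Definition len_diffs : list Z :=
  List.map (fun i => Z.of_nat i - max_len_diff) (List.seq 0 (2 * Z.to_nat max_len_diff + 1)).

(* All [image_state p delta st a b c d] with a feasible [delta], parametrised by
   the length difference [e] of the image; [(- (l + m), dL + m)] evaluates to
   [delta]. *)
Definition successors (ora : oracle) (st : state) : list state :=
  let: State l s m a' b' c' d' := st in
  List.flat_map (fun a => List.flat_map (fun b => List.flat_map (fun c => List.flat_map (fun d =>
    match offset_diff_range ora a' b' a b, offset_diff_range ora c' d' c d with
    | Some (lov, hiv), Some (low, hiw) =>
        List.flat_map (fun e =>
          let dL := e - (l + m) - s in
          if maybe_between ora (lin_sub lov hiw) (- (l + m), dL + m) (lin_sub hiv low)
          then [:: State dL (l + m) s a b c d] else [::]) len_diffs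
    | _, _ => [::]
    end) letters) letters) letters) letters.

Record frontier := Frontier { pending : list state; seen : store }.

Definition visit (x : frontier) (s : state) : frontier :=
  if store_mem s (seen x) then x else Frontier (s :: pending x) (store_add s (seen x)).

Definition explore_step (ora : oracle) (x : frontier) : frontier :=
  if pending x is s :: w then List.fold_left visit (successors ora s) (Frontier w (seen x)) else x.

Definition short_parikh : list (Z * Z * Z) :=
  [:: (0, 0, 0); (1, 0, 0); (0, 1, 0); (0, 0, 1); (2, 0, 0);
      (0, 2, 0); (0, 0, 2); (1, 1, 0); (1, 0, 1); (0, 1, 1)].

Definition initial_states : list state :=
  List.flat_map (fun v => List.flat_map (fun w =>
    let: (v1, v2, v3) := v in let: (w1, w2, w3) := w in
    List.flat_map (fun a => List.flat_map (fun b => List.flat_map (fun c => List.map (fun d =>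
      State (v1 - w1) (v2 - w2) (v3 - w3) a b c d) letters) letters) letters) letters)
    short_parikh) short_parikh.

Definition explore (ora : oracle) (fuel : positive) : store :=
  seen (Pos.iter (explore_step ora)
          (List.fold_left visit initial_states (Frontier [::] (PositiveMap.empty _))) fuel).

Definition len_diff (s : state) : Z := let: State l s' m _ _ _ _ := s in l + s' + m.

(* Length difference of the images, up to the boundary corrections. *)
Definition image_len_diff (s : state) : lin := let: State l s' m _ _ _ _ := s in (l + m, l + s').

(* [delta] accounts for where the factors start and end inside the images of
   their boundary letters. *)
Definition image_state (p delta : Z) (st : state) (a b c d : letter) : state :=
  let: State l s m _ _ _ _ := st in State (p * l + (p - 1) * m + delta) (l + m) s a b c d.

Definition closedb (ora : oracle) (m : store) : bool :=
  List.forallb (fun s => List.forallb (store_mem^~ m) (successors ora s)) (store_elements m).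

(* On the edge of the length window, the images must differ in length by at
   least [2 p + 7]: more than the boundary corrections (at most [2 p]) undo. *)
Definition boundaryb (ora : oracle) (m : store) : bool :=
  List.forallb (fun s =>
    ((len_diff s =? max_len_diff) ==> (ora (2, max_len_diff) (image_len_diff s) == Some true))
    && ((len_diff s =? - max_len_diff) ==> (ora (image_len_diff s) (-2, - max_len_diff) == Some true)))
    (store_elements m).

Definition target_freeb (m : store) : bool :=
  List.forallb (fun s => let: State l s' m _ _ _ _ := s in ~~ [&& l =? 3, s' =? -2 & m =? -1])
    (store_elements m).

Definition initialb (m : store) : bool := List.forallb (store_mem^~ m) initial_states.

Definition certificateb (ora : oracle) (m : store) : bool :=
  [&& closedb ora m, boundaryb ora m, target_freeb m & initialb m].

End Certificate.


Section Soundness.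
Local Open Scope Z_scope.
Local Coercion Z.of_nat : nat >-> Z.

Lemma lin_eval_pair p k c : lin_eval p (k, c) = k * p + c.
Proof. by []. Qed.

Lemma lin_eval_sub p f g : lin_eval p (lin_sub f g) = lin_eval p f - lin_eval p g.
Proof. by case: f g => [k1 c1] [k2 c2]; rewrite /lin_eval /lin_sub; cbn [fst snd]; ring. Qed.

Definition oracle_sound (ora : oracle) (p : Z) :=
  forall f g b, ora f g = Some b -> (lin_eval p f <=? lin_eval p g) = b.

Lemma oracle_at_sound p : oracle_sound (oracle_at p) p.
Proof. by move=> f g b [<-]. Qed.

(* A nonnegative slope and a nonnegative value at [p0] give a nonnegative value at every [p >= p0]. *)
Lemma oracle_from_sound p0 p : p0 <= p -> oracle_sound (oracle_from p0) p.
Proof.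
move=> le_p [k1 c1] [k2 c2] b; rewrite /oracle_from /lin_sub /lin_eval /=.
have slope k : 0 <= k -> 0 <= k * (p - p0) by move=> ?; apply: Z.mul_nonneg_nonneg; lia.
case: ifP => [/andP[/Z.leb_le ? /Z.leb_le ?] [<-]|_].
  by apply/Z.leb_le; have := slope (k2 - k1); nia.
case: ifP => // /andP[/Z.leb_le ? /Z.ltb_lt ?] [<-].
by apply/Z.leb_gt; have := slope (k1 - k2); nia.
Qed.

Lemma refuted_sound ora p f g :
  oracle_sound ora p -> lin_eval p f <= lin_eval p g -> refuted (ora f g) = false.
Proof. by move=> ora_ok le_fg; case E: (ora f g) => [[]|] //; move/ora_ok/Z.leb_gt: E; lia. Qed.

Lemma maybe_between_sound ora p lo x hi : oracle_sound ora p ->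
  lin_eval p lo <= lin_eval p x <= lin_eval p hi -> maybe_between ora lo x hi.
Proof. by move=> ora_ok [? ?]; rewrite /maybe_between !(refuted_sound ora_ok). Qed.

Lemma head_run_linE p c : (0 < p)%N -> lin_eval p (head_run_lin c) = head_run p c.
Proof. by case: c; rewrite /lin_eval; cbn [head_run_lin head_run fst snd]; rewrite -?subn1 => ?; lia. Qed.

Section Offsets.
Variables (ora : oracle) (p : nat).
Hypotheses (p_gt0 : (0 < p)%N) (ora_ok : oracle_sound ora p).

Lemma offset_range_sound c' r : (r <= head_run p c')%N ->
  exists lo hi, offset_range ora c' (nth L (phi_letter p c') r) = Some (lo, hi)
                /\ lin_eval p lo <= r <= lin_eval p hi.
Proof.
have hrE := head_run_linE c' p_gt0.
case: (ltngtP r (head_run p c')) => [lt_r _|//|-> _].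
  rewrite nth_phi_letter_lt // /offset_range (refuted_sound ora_ok);
    last by rewrite lin_eval_sub !lin_eval_pair hrE; lia.
  exists (0, 0), (lin_sub (head_run_lin c') (0, 1)); split => //.
  by rewrite lin_eval_sub !lin_eval_pair hrE; lia.
rewrite nth_phi_letter_head; exists (head_run_lin c'), (head_run_lin c').
by split; [case: c' {hrE} => /=; rewrite ?eqxx | rewrite hrE; lia].
Qed.

Lemma offset_diff_range_sound a' b' ra rb :
  (ra <= head_run p a')%N -> (rb <= head_run p b')%N ->
  exists lo hi, offset_diff_range ora a' b' (nth L (phi_letter p a') ra) (nth L (phi_letter p b') rb)
                  = Some (lo, hi)
                /\ lin_eval p lo <= rb - ra <= lin_eval p hi.
Proof.
move=> /offset_range_sound[loa [hia [Ea Ha]]] /offset_range_sound[lob [hib [Eb Hb]]].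
rewrite /offset_diff_range Ea Eb; do 2 eexists; split; first by [].
by rewrite /= !lin_eval_sub; lia.
Qed.

Lemma successors_sound l s m a' b' c' d' ra rb rc rd :
  (ra <= head_run p a')%N -> (rb <= head_run p b')%N ->
  (rc <= head_run p c')%N -> (rd <= head_run p d')%N ->
  let t := image_state p ((rb - ra) - (rd - rc)) (State l s m a' b' c' d')
             (nth L (phi_letter p a') ra) (nth L (phi_letter p b') rb)
             (nth L (phi_letter p c') rc) (nth L (phi_letter p d') rd) in
  - max_len_diff <= len_diff t <= max_len_diff ->
  List.In t (successors ora (State l s m a' b' c' d')).
Proof.
move=> /offset_diff_range_sound Hv /(Hv _ _)[lov [hiv [Ev Hv']]].
move=> /offset_diff_range_sound Hw /(Hw _ _)[low [hiw [Ew Hw']]].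
cbn [image_state len_diff]; set dL := _ * l + _ * m + _ => He.
have pick x (F : letter -> list state) t' : List.In t' (F x) -> List.In t' (List.flat_map F letters).
  by move=> Ft; apply/List.in_flat_map; exists x; split => //; case: x {Ft}; rewrite /=; tauto.
rewrite /successors.
apply: (pick (nth L (phi_letter p a') ra)); apply: (pick (nth L (phi_letter p b') rb)).
apply: (pick (nth L (phi_letter p c') rc)); apply: (pick (nth L (phi_letter p d') rd)).
rewrite Ev Ew; apply/List.in_flat_map; exists (dL + (l + m) + s); split.
  apply/List.in_map_iff; exists (Z.to_nat (dL + (l + m) + s + max_len_diff)).
  by split; [|apply/List.in_seq]; rewrite /max_len_diff in He *; lia.
have -> : dL + (l + m) + s - (l + m) - s = dL by lia.
rewrite (maybe_between_sound ora_ok) /=; first by left.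
by rewrite !lin_eval_sub lin_eval_pair /dL; lia.
Qed.

End Offsets.

Lemma state_eqbP s t : state_eqb s t -> s = t.
Proof.
case: s t => [l1 s1 m1 a1 b1 c1 d1] [l2 s2 m2 a2 b2 c2 d2] /=.
by case/and5P => /Z.eqb_eq -> /Z.eqb_eq -> /Z.eqb_eq -> /eqP -> /and3P[/eqP -> /eqP -> /eqP ->].
Qed.

Lemma store_mem_elements m s : store_mem s m -> List.In s (store_elements m).
Proof.
rewrite /store_mem /bucket; case E: (PositiveMap.find _ _) => [l|] //=.
case/List.existsb_exists => t [t_l /state_eqbP eq_st]; subst t.
apply/List.in_flat_map; exists (state_key s, l); split => //.
exact: PositiveMap.elements_correct.
Qed.

Lemma forallb_stored (P : state -> bool) m s :
  List.forallb P (store_elements m) -> store_mem s m -> P s.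
Proof. by move/List.forallb_forall => allP /store_mem_elements /allP. Qed.

Lemma closed_sound ora m s t :
  closedb ora m -> store_mem s m -> List.In t (successors ora s) -> store_mem t m.
Proof. by move=> cl /(forallb_stored cl) /List.forallb_forall; apply. Qed.

Lemma boundary_sound ora p m s : oracle_sound ora p -> boundaryb ora m -> store_mem s m ->
  (len_diff s = max_len_diff -> 2 * p + max_len_diff <= lin_eval p (image_len_diff s)) /\
  (len_diff s = - max_len_diff -> lin_eval p (image_len_diff s) <= -2 * p - max_len_diff).
Proof.
move=> ora_ok bd /(forallb_stored bd) /andP[hi lo]; split=> E.
  have : ora (2, max_len_diff) (image_len_diff s) = Some true.
    by move: hi; rewrite E Z.eqb_refl; case: (ora _ _) => [[]|].
  by move/ora_ok/Z.leb_le; rewrite lin_eval_pair; lia.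
have : ora (image_len_diff s) (-2, - max_len_diff) = Some true.
  by move: lo; rewrite E Z.eqb_refl; case: (ora _ _) => [[]|].
by move/ora_ok/Z.leb_le; rewrite lin_eval_pair; lia.
Qed.

Lemma target_free_sound m a b c d : target_freeb m -> ~~ store_mem (State 3 (-2) (-1) a b c d) m.
Proof. by move=> tf; apply/negP => /(forallb_stored tf). Qed.

Lemma initial_sound m v w a b c d : initialb m ->
  List.In v short_parikh -> List.In w short_parikh ->
  store_mem (State (v.1.1 - w.1.1) (v.1.2 - w.1.2) (v.2 - w.2) a b c d) m.
Proof.
move=> /List.forallb_forall init v_sh w_sh; apply: init.
have inL x : List.In x letters by case: x; rewrite /=; tauto.
apply/List.in_flat_map; exists v; split => //; apply/List.in_flat_map; exists w; split => //.
case: v v_sh => [[v1 v2] v3] _; case: w w_sh => [[w1 w2] w3] _.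
do 3 (apply/List.in_flat_map; eexists; split; first exact: inL).
by apply/List.in_map_iff; eexists; split; [|exact: inL].
Qed.

End Soundness.

Lemma short_parikh_size (w : seq letter) : (size w <= 2)%N ->
  List.In (Z.of_nat (count_mem L w), Z.of_nat (count_mem S w), Z.of_nat (count_mem M w))
          short_parikh.
Proof. by case: w => [|x [|y [|z w]]] //= _; [|case: x|case: x; case: y]; rewrite /=; tauto. Qed.

Section Invariant.
Local Open Scope Z_scope.
Local Coercion Z.of_nat : nat >-> Z.
Variables (p : nat) (ora : oracle) (m : store).
Hypotheses (p_gt1 : (1 < p)%N) (ora_ok : oracle_sound ora p).
Hypotheses (m_closed : closedb ora m) (m_boundary : boundaryb ora m) (m_initial : initialb m).

Definition wcount (c : letter) (a b : nat) : Z := ucount p c b - ucount p c a.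

Definition pair_state (a b c d : nat) : state :=
  State (wcount L a b - wcount L c d) (wcount S a b - wcount S c d)
        (wcount M a b - wcount M c d) (u p a) (u p b) (u p c) (u p d).

Lemma len_diff_pair_state a b c d :
  len_diff (pair_state a b c d) = (Z.of_nat b - a) - (Z.of_nat d - c).
Proof. by rewrite /= /wcount; rewrite -!(ucount_sum p); lia. Qed.

Lemma image_len_diff_pair_state a b c d :
  lin_eval p (image_len_diff (pair_state a b c d))
  = (Z.of_nat (phi_pos p b) - phi_pos p a) - (Z.of_nat (phi_pos p d) - phi_pos p c).
Proof. by rewrite /= lin_eval_pair /wcount !(phi_posE (ltnW p_gt1)); lia. Qed.

Lemma pair_state_short a b c d : (a <= b <= a + 2)%N -> (c <= d <= c + 2)%N ->
  store_mem (pair_state a b c d) m.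
Proof.
move=> /andP[le_ab le_b] /andP[le_cd le_d].
rewrite /pair_state /wcount -(subnKC le_ab) -(subnKC le_cd) !(ucount_window p).
by apply: (@initial_sound m (_, _, _) (_, _, _)) => //;
  apply: short_parikh_size; rewrite size_map size_iota; lia.
Qed.

Lemma pair_state_boundary a b c d : store_mem (pair_state a b c d) m ->
  ((Z.of_nat b - a) - (Z.of_nat d - c) = max_len_diff ->
     2 * p + max_len_diff
     <= (Z.of_nat (phi_pos p b) - phi_pos p a) - (Z.of_nat (phi_pos p d) - phi_pos p c)) /\
  ((Z.of_nat b - a) - (Z.of_nat d - c) = - max_len_diff ->
     (Z.of_nat (phi_pos p b) - phi_pos p a) - (Z.of_nat (phi_pos p d) - phi_pos p c)
     <= -2 * p - max_len_diff).
Proof.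
move/(boundary_sound ora_ok m_boundary).
by rewrite len_diff_pair_state image_len_diff_pair_state.
Qed.

Lemma pair_state_phiE a' b' c' d' ra rb rc rd :
  (ra <= head_run p (u p a'))%N -> (rb <= head_run p (u p b'))%N ->
  (rc <= head_run p (u p c'))%N -> (rd <= head_run p (u p d'))%N ->
  pair_state (phi_pos p a' + ra) (phi_pos p b' + rb) (phi_pos p c' + rc) (phi_pos p d' + rd)
  = image_state p ((rb - ra) - (rd - rc)) (pair_state a' b' c' d')
      (nth L (phi_letter p (u p a')) ra) (nth L (phi_letter p (u p b')) rb)
      (nth L (phi_letter p (u p c')) rc) (nth L (phi_letter p (u p d')) rd).
Proof.
move=> ha hb hc hd; rewrite /pair_state /image_state /wcount !(u_phi_pos (ltnW p_gt1)) //.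
have [-> -> ->] := ucount_phi_pos (ltnW p_gt1) ha; have [-> -> ->] := ucount_phi_pos (ltnW p_gt1) hb.
have [-> -> ->] := ucount_phi_pos (ltnW p_gt1) hc; have [-> -> ->] := ucount_phi_pos (ltnW p_gt1) hd.
by f_equal; lia.
Qed.

Lemma pair_state_phi a' b' c' d' ra rb rc rd :
  (ra <= head_run p (u p a'))%N -> (rb <= head_run p (u p b'))%N ->
  (rc <= head_run p (u p c'))%N -> (rd <= head_run p (u p d'))%N ->
  let a := (phi_pos p a' + ra)%N in let b := (phi_pos p b' + rb)%N in
  let c := (phi_pos p c' + rc)%N in let d := (phi_pos p d' + rd)%N in
  - max_len_diff <= (Z.of_nat b - a) - (Z.of_nat d - c) <= max_len_diff ->
  store_mem (pair_state a' b' c' d') m -> store_mem (pair_state a b c d) m.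
Proof.
move=> ha hb hc hd a b c d len anc; apply: (closed_sound m_closed anc).
move: len; rewrite -len_diff_pair_state /a /b /c /d (pair_state_phiE ha hb hc hd).
exact: (successors_sound (ltnW p_gt1)).
Qed.

(* If the ancestors' lengths differed by more than 7, truncating the longer
   ancestor would give a stored pair on the edge of the window, and the images
   of the ancestors would differ in length by more than [2 p + 7]. *)
Lemma ancestor_len_diff n a' b' c' d' ra rb rc rd :
  (forall a b c d, (a <= b)%N -> (c <= d)%N -> (b - a + (d - c) <= n)%N ->
     - max_len_diff <= (Z.of_nat b - a) - (Z.of_nat d - c) <= max_len_diff ->
     store_mem (pair_state a b c d) m) ->
  (ra <= head_run p (u p a'))%N -> (rb <= head_run p (u p b'))%N ->
  (rc <= head_run p (u p c'))%N -> (rd <= head_run p (u p d'))%N ->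
  (a' <= b')%N -> (c' <= d')%N -> (b' - a' + (d' - c') <= n)%N ->
  - max_len_diff <= (Z.of_nat (phi_pos p b' + rb) - (phi_pos p a' + ra)%N)
                    - (Z.of_nat (phi_pos p d' + rd) - (phi_pos p c' + rc)%N) <= max_len_diff ->
  - max_len_diff <= (Z.of_nat b' - a') - (Z.of_nat d' - c') <= max_len_diff.
Proof.
move=> IH ha hb hc hd le_ab le_cd size_n len.
have := head_run_le p (u p a'); have := head_run_le p (u p b').
have := head_run_le p (u p c'); have := head_run_le p (u p d').
rewrite /max_len_diff in len *; split; apply/Z.nlt_ge => out.
- set k := (c' + (b' - a') + 7)%N.
  have lt_kd : (k < d')%N by lia.
  have stored_k : store_mem (pair_state a' b' c' k) m.
    by apply: IH => //; rewrite /max_len_diff; lia.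
  have [_ bd] := pair_state_boundary stored_k.
  have := bd ltac:(rewrite /max_len_diff; lia); have := leq_phi_pos p (ltnW lt_kd).
  by rewrite /max_len_diff; lia.
- set k := (a' + (d' - c') + 7)%N.
  have lt_kb : (k < b')%N by lia.
  have stored_k : store_mem (pair_state a' k c' d') m.
    by apply: IH => //; rewrite /max_len_diff; lia.
  have [bd _] := pair_state_boundary stored_k.
  have := bd ltac:(rewrite /max_len_diff; lia); have := leq_phi_pos p (ltnW lt_kb).
  by rewrite /max_len_diff; lia.
Qed.

Lemma pair_state_stored n a b c d : (a <= b)%N -> (c <= d)%N -> (b - a + (d - c) <= n)%N ->
  - max_len_diff <= (Z.of_nat b - a) - (Z.of_nat d - c) <= max_len_diff ->
  store_mem (pair_state a b c d) m.
Proof.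
elim: n a b c d => [|n IH] a b c d le_ab le_cd size_n len.
  by apply: pair_state_short; lia.
case: (boolP [&& b - a <= 2 & d - c <= 2]%N) => [/andP[? ?]|long].
  by apply: pair_state_short; lia.
have [a' [ra [ha Ea]]] := phi_pos_decomp p a; subst a.
have [b' [rb [hb Eb]]] := phi_pos_decomp p b; subst b.
have [c' [rc [hc Ec]]] := phi_pos_decomp p c; subst c.
have [d' [rd [hd Ed]]] := phi_pos_decomp p d; subst d.
have [shv shv3] := ancestor_window_shorter p_gt1 ha hb le_ab.
have [shw shw3] := ancestor_window_shorter p_gt1 hc hd le_cd.
have le_ab' := phi_pos_ancestor_le le_ab hb.
have le_cd' := phi_pos_ancestor_le le_cd hd.
have size_n' : (b' - a' + (d' - c') <= n)%N.
  by move: long; rewrite negb_and -!ltnNge => /orP[/shv3|/shw3]; lia.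
apply: pair_state_phi => //; apply: (IH) => //.
exact: (ancestor_len_diff IH ha hb hc hd).
Qed.

End Invariant.

Definition certificate2 : store := explore (oracle_at 2) 100000.
Definition certificate3 : store := explore (oracle_at 3) 100000.
Definition certificate_ge4 : store := explore (oracle_from 4) 100000.

Lemma certificate2_ok : certificateb (oracle_at 2) certificate2.
Proof. by vm_compute. Qed.

Lemma certificate3_ok : certificateb (oracle_at 3) certificate3.
Proof. by vm_compute. Qed.

Lemma certificate_ge4_ok : certificateb (oracle_from 4) certificate_ge4.
Proof. by vm_compute. Qed.

Lemma certificate_exists p : (1 < p)%N ->
  exists ora m, oracle_sound ora (Z.of_nat p) /\ certificateb ora m.
Proof.
move=> p_gt1; case: (ltnP p 4) => [lt_p4|ge_p4].
  have [->|->] : p = 2%N \/ p = 3%N by lia.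
    by exists (oracle_at 2), certificate2; split; [exact: oracle_at_sound|exact: certificate2_ok].
  by exists (oracle_at 3), certificate3; split; [exact: oracle_at_sound|exact: certificate3_ok].
exists (oracle_from 4), certificate_ge4.
by split; [apply: oracle_from_sound; lia|exact: certificate_ge4_ok].
Qed.

Section Windows.
Local Open Scope Z_scope.
Local Coercion Z.of_nat : nat >-> Z.

Lemma uwindow_parikh_diff p i j n : (1 < p)%N ->
  ~ [/\ Z.of_nat (count_mem L (uwindow p i n)) - count_mem L (uwindow p j n) = 3,
        Z.of_nat (count_mem S (uwindow p i n)) - count_mem S (uwindow p j n) = -2
      & Z.of_nat (count_mem M (uwindow p i n)) - count_mem M (uwindow p j n) = -1].
Proof.
move=> p_gt1 [eL eS eM]; have [ora [m [ora_ok /and4P[closed bd tf init]]]] := certificate_exists p_gt1.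
have := pair_state_stored p_gt1 ora_ok closed bd init (leq_addr n i) (leq_addr n j) (leqnn _).
rewrite /pair_state /wcount !ucount_window eL eS eM /max_len_diff => stored.
by move/negP: (target_free_sound (u p i) (u p (i + n)) (u p j) (u p (j + n)) tf); apply; apply: stored; lia.
Qed.

End Windows.

Import GRing.Theory.
Local Open Scope ring_scope.

Theorem proposition8p2 (p : nat) (hp : (1 < p)%N) :
  ~ exists v w : seq letter,
      [/\ factor p v, factor p w &
          ((parikh v).1.1 - (parikh w).1.1,
           (parikh v).1.2 - (parikh w).1.2,
           (parikh v).2 - (parikh w).2) = (3%:Z, - 2%:Z, - 1%:Z)].
Proof.
move=> [_ [_ [[i [n ->]] [j [n' ->]] eq_parikh]]].
have [dL dS dM] : [/\ (count_mem L (uwindow p i n))%:Z - (count_mem L (uwindow p j n'))%:Z = 3,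
                      (count_mem S (uwindow p i n))%:Z - (count_mem S (uwindow p j n'))%:Z = - 2
                    & (count_mem M (uwindow p i n))%:Z - (count_mem M (uwindow p j n'))%:Z = - 1].
  by case: eq_parikh.
have eq_n : n' = n.
  have := size_parikh (uwindow p i n); have := size_parikh (uwindow p j n').
  by rewrite !size_map !size_iota => ? ?; lia.
subst n'; apply: (@uwindow_parikh_diff p i j n hp).
by split; lia.
Qed.
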